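(* For all flow graphs $h_1,h_2$ over a flow monoid $\mathbb{M}$ with $h_1\#\#h_2$, one has $h_1.\mathit{flow}\uplus h_2.\mathit{flow}\ \ge\ (h_1\uplus h_2).\mathit{flow}$ pointwise on $X_1\uplus X_2$.
   Context: A flow monoid is a commutative monoid $(\mathbb{M},+,0)$ such that $n\le m :\iff \exists o.\ m=n+o$ is a partial order in which every ascending chain $K$ has a least upper bound $\bigsqcup K$, and $n+\bigsqcup K=\bigsqcup(n+K)$. $\mathcal{C}(\mathbb{M}\to\mathbb{M})$ is the set of functions commuting with least upper bounds of ascending chains. Infinite sums denote least upper bounds of finite partial sums. A flow graph is $h=(X,E,\mathit{in})$ with $X\subseteq\mathbb{N}$ finite, $E:X\times\mathbb{N}\to\mathcal{C}(\mathbb{M}\to\mathbb{M})$, $\mathit{in}:(\mathbb{N}\setminus X)\times X\to\mathbb{M}$; $\mathit{in}_x=\sum_{y\in\mathbb{N}\setminus X}\mathit{in}(y,x)$; the flow $h.\mathit{flow}$ is the least $\mathit{flow}:X\to\mathbb{M}$ with $\mathit{flow}(x)=\mathit{in}_x+\sum_{y\in X}E(y,x)(\mathit{flow}(y))$; the outflow is $h.\mathit{out}(x,y)=E(x,y)(h.\mathit{flow}(x))$ for $x\in X$, $y\notin X$. For $h_i=(X_i,E_i,\mathit{in}_i)$: $h_1\#\#h_2$ iff $X_1\cap X_2=\emptyset$ and for all $x\in X_1,y\in X_2$, $h_1.\mathit{out}(x,y)=\mathit{in}_2(x,y)$ and $h_2.\mathit{out}(y,x)=\mathit{in}_1(y,x)$;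 and $h_1\uplus h_2=(X_1\uplus X_2,E_1\uplus E_2,(\mathit{in}_1\uplus\mathit{in}_2)|_{(\mathbb{N}\setminus(X_1\uplus X_2))\times(X_1\uplus X_2)})$. *)

From Stdlib Require Import ClassicalEpsilon.
From mathcomp Require Import all_boot finmap.
Set Implicit Arguments. Unset Strict Implicit. Unset Printing Implicit Defensive.
Local Open Scope fset_scope.

Definition mle {T : Type} (add : T -> T -> T) (a b : T) : Prop :=
  exists o, b = add a o.

Definition ascending {T : Type} (add : T -> T -> T) (K : nat -> T) : Prop :=
  forall n, mle add (K n) (K n.+1).

Definition is_lub {T : Type} (add : T -> T -> T) (K : nat -> T) (l : T) : Prop :=
  (forall n, mle add (K n) l) /\
  (forall u, (forall n, mle add (K n) u) -> mle add l u).

Definition partial_order {T : Type} (R : T -> T -> Prop) : Prop :=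
  (forall a, R a a) /\ (forall a b c, R a b -> R b c -> R a c) /\
  (forall a b, R a b -> R b a -> a = b).

Record flowMonoid := FlowMonoid {
  fm_car :> Type;
  fm_add : fm_car -> fm_car -> fm_car;
  fm_zero : fm_car;
  fm_addC : forall a b, fm_add a b = fm_add b a;
  fm_addA : forall a b c, fm_add a (fm_add b c) = fm_add (fm_add a b) c;
  fm_add0 : forall a, fm_add fm_zero a = a;
  fm_po : partial_order (mle fm_add);
  fm_chain_lub : forall K, ascending fm_add K -> exists l, is_lub fm_add K l;
  fm_add_lub : forall n K l, ascending fm_add K -> is_lub fm_add K l ->
                 is_lub fm_add (fun i => fm_add n (K i)) (fm_add n l)
}.

Section FlowDefs.
Variable M : flowMonoid.

Local Notation le := (mle (@fm_add M)).

Definition sup (K : nat -> M) : M :=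
  epsilon (inhabits (fm_zero M)) (is_lub (@fm_add M) K).

Definition fsum {I : Type} (r : seq I) (F : I -> M) : M :=
  \big[@fm_add M / fm_zero M]_(i <- r) F i.

Definition isum (g : nat -> M) : M :=
  sup (fun n => fsum (iota 0 n) g).

Definition continuous_fm (f : M -> M) : Prop :=
  forall K l, ascending (@fm_add M) K -> is_lub (@fm_add M) K l ->
    is_lub (@fm_add M) (fun i => f (K i)) (f l).

(* flow graphs (X, E, in); E is meaningful on X x N, in on (N \ X) x X *)
Record flowGraph := FlowGraph {
  fg_X : {fset nat};
  fg_E : nat -> nat -> M -> M;
  fg_in : nat -> nat -> M
}.

Definition fg_wf (h : flowGraph) : Prop :=
  forall x y, x \in fg_X h -> continuous_fm (fg_E h x y).

Definition inflow (h : flowGraph) (x : nat) : M :=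
  isum (fun y => if y \in fg_X h then fm_zero M else fg_in h y x).

Definition is_flow_sol (h : flowGraph) (f : nat -> M) : Prop :=
  forall x, x \in fg_X h ->
    f x = fm_add (inflow h x) (fsum (fg_X h) (fun y => fg_E h y x (f y))).

Definition is_least_flow (h : flowGraph) (f : nat -> M) : Prop :=
  is_flow_sol h f /\
  forall g, is_flow_sol h g -> forall x, x \in fg_X h -> le (f x) (g x).

(* h.flow : the least solution (only its values on X are meaningful) *)
Definition flow (h : flowGraph) : nat -> M :=
  epsilon (inhabits (fun _ => fm_zero M)) (is_least_flow h).

Definition outflow (h : flowGraph) (x y : nat) : M := fg_E h x y (flow h x).

Definition fg_compat (h1 h2 : flowGraph) : Prop :=
  (forall x, x \in fg_X h1 -> x \notin fg_X h2) /\
  (forall x y, x \in fg_X h1 -> y \in fg_X h2 ->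
     outflow h1 x y = fg_in h2 x y /\ outflow h2 y x = fg_in h1 y x).

(* h1 (+) h2 ; the inflow is only consulted on (N \ (X1 u X2)) x (X1 u X2) *)
Definition fg_union (h1 h2 : flowGraph) : flowGraph :=
  FlowGraph (fg_X h1 `|` fg_X h2)
    (fun x y => if x \in fg_X h1 then fg_E h1 x y else fg_E h2 x y)
    (fun y x => if x \in fg_X h1 then fg_in h1 y x else fg_in h2 y x).

Definition flow_union (h1 h2 : flowGraph) (x : nat) : M :=
  if x \in fg_X h1 then flow h1 x else flow h2 x.

End FlowDefs.

From mathcomp Require Import all_boot finmap.
From HB Require Import structures.
From Stdlib Require Import ClassicalEpsilon FunctionalExtensionality.
Set Implicit Arguments. Unset Strict Implicit. Unset Printing Implicit Defensive.
Local Open Scope fset_scope.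

(* The flow of the composite graph h1 (+) h2 is, by definition,
   the LEAST solution of its flow equation, so it suffices to show that the
   juxtaposition h1.flow (+) h2.flow is SOME solution of that equation.
   For x in X1, the inflow of h1 at x splits into the inflow coming from
   outside X1 u X2 (which is the inflow of the composite graph) and the
   inflow coming from X2, which by h1 ## h2 is the outflow of h2 into x;
   so the flow equation of h1 at x becomes the composite equation at x
   (symmetrically for x in X2). *)

HB.instance Definition fm_comlaw (M : flowMonoid) :=
  Monoid.isComLaw.Build (fm_car M) (fm_zero M) (@fm_add M)
    (@fm_addA M) (@fm_addC M) (@fm_add0 M).

Section FlowMonoidTheory.
Variable M : flowMonoid.
Local Notation add := (@fm_add M).
Local Notation le := (mle (@fm_add M)).
Local Notation zero := (fm_zero M).

Lemma le_refl a : le a a.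
Proof. by case: (fm_po M) => refl _; apply: refl. Qed.

Lemma le_trans a b c : le a b -> le b c -> le a c.
Proof. by case: (fm_po M) => _ [trans _]; apply: trans. Qed.

Lemma le_anti a b : le a b -> le b a -> a = b.
Proof. by case: (fm_po M) => _ [_ anti]; apply: anti. Qed.

Lemma le0 a : le zero a.
Proof. by exists a; rewrite fm_add0. Qed.

Lemma le_add a b c d : le a b -> le c d -> le (add a c) (add b d).
Proof.
move=> [o ->] [p ->]; exists (add o p).
by rewrite -!fm_addA; congr (add a _); rewrite fm_addA (fm_addC o) -fm_addA.
Qed.

Lemma ascending_mono K : ascending add K -> forall m n, m <= n -> le (K m) (K n).
Proof.
move=> ascK m n /subnKC <-; elim: (n - m) => [|k IH]; first by rewrite addn0; apply: le_refl.
by rewrite addnS; apply: le_trans IH (ascK _).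
Qed.

Lemma lub_unique K l l' : is_lub add K l -> is_lub add K l' -> l = l'.
Proof. by move=> [ub1 least1] [ub2 least2]; apply: le_anti; [apply: least1|apply: least2]. Qed.

Lemma sup_is_lub K : ascending add K -> is_lub add K (sup K).
Proof. by move=> ascK; apply: epsilon_spec; apply: fm_chain_lub. Qed.

Lemma lub_shift K l : ascending add K -> is_lub add K l -> is_lub add (fun n => K n.+1) l.
Proof.
move=> ascK [ub least]; split => // u Hu; apply: least => n.
exact: le_trans (ascK n) (Hu n).
Qed.

Lemma lub_eventually_const K N c : ascending add K -> (forall n, N <= n -> K n = c) ->
  is_lub add K c.
Proof.
move=> ascK Kc; split; last by move=> u Hu; rewrite -(Kc N).
move=> n; rewrite -(Kc (maxn n N)) ?leq_maxr //.
by apply: ascending_mono; rewrite ?leq_maxl.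
Qed.

(* Addition is continuous jointly in both arguments: the sum of two chains has
   the sum of their lubs as lub.  This extends the one-sided axiom
   [fm_add_lub] by a diagonal argument. *)
Lemma is_lub_add A B a b : ascending add A -> ascending add B ->
  is_lub add A a -> is_lub add B b ->
  ascending add (fun n => add (A n) (B n)) /\
  is_lub add (fun n => add (A n) (B n)) (add a b).
Proof.
move=> ascA ascB lubA lubB; split; first by move=> n; apply: le_add.
have [ubA _] := lubA; have [ubB _] := lubB.
split; first by move=> n; apply: le_add.
move=> u Hu.
have bounded_left m : le (add (A m) b) u.
  have [_ least] := fm_add_lub (A m) ascB lubB.
  apply: least => n; apply: le_trans (Hu (maxn m n)).
  by apply: le_add; apply: ascending_mono; rewrite ?leq_maxl ?leq_maxr.
have [_ least] := fm_add_lub b ascA lubA.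
by rewrite fm_addC; apply: least => n; rewrite fm_addC.
Qed.

(* Continuous functions are monotone (apply continuity to the chain a, b, b, ...). *)
Lemma continuous_mono (f : M -> M) : continuous_fm f -> forall a b, le a b -> le (f a) (f b).
Proof.
move=> contf a b ab.
pose K n := if n is 0 then a else b.
have ascK : ascending add K by case=> [|n] /=; [exact: ab | exact: le_refl].
have lubK : is_lub add K b by apply: (@lub_eventually_const _ 1) => // -[|n].
by have [ub _] := contf K b ascK lubK; apply: (ub 0).
Qed.

Lemma fsum_nil I F : fsum (@nil I) F = zero.
Proof. by rewrite /fsum big_nil. Qed.

Lemma fsum_cons I (x : I) r F : fsum (x :: r) F = add (F x) (fsum r F).
Proof. by rewrite /fsum big_cons. Qed.

Lemma eq_fsum (I : eqType) (r : seq I) (F G : I -> M) :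
  (forall y, y \in r -> F y = G y) -> fsum r F = fsum r G.
Proof. by move=> FG; rewrite /fsum big_seq_cond [RHS]big_seq_cond; apply: eq_bigr => i /andP [/FG]. Qed.

Lemma le_fsum (I : eqType) (r : seq I) F G : (forall y, y \in r -> le (F y) (G y)) ->
  le (fsum r F) (fsum r G).
Proof.
elim: r => [|x r IH] FG; first by rewrite !fsum_nil; apply: le_refl.
rewrite !fsum_cons; apply: le_add; first by apply: FG; rewrite mem_head.
by apply: IH => y ry; apply: FG; rewrite inE ry orbT.
Qed.

Lemma fsum_chain_lub (I : eqType) (r : seq I) (K : I -> nat -> M) l :
  (forall y, y \in r -> ascending add (K y) /\ is_lub add (K y) (l y)) ->
  ascending add (fun n => fsum r (fun y => K y n)) /\
  is_lub add (fun n => fsum r (fun y => K y n)) (fsum r l).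
Proof.
elim: r => [|x r IH] lubK.
  have -> : (fun n => fsum [::] (fun y => K y n)) = fun _ => zero.
    by apply: functional_extensionality => n; rewrite fsum_nil.
  rewrite fsum_nil; split; first by move=> n; apply: le_refl.
  by apply: (@lub_eventually_const _ 0) => // n; apply: le_refl.
have [ascx lubx] := lubK x (mem_head _ _).
have [ascr lubr] : ascending add (fun n => fsum r (fun y => K y n)) /\
    is_lub add (fun n => fsum r (fun y => K y n)) (fsum r l).
  by apply: IH => y ry; apply: lubK; rewrite inE ry orbT.
have -> : (fun n => fsum (x :: r) (fun y => K y n)) =
          fun n => add (K x n) (fsum r (fun y => K y n)).
  by apply: functional_extensionality => n; rewrite fsum_cons.
by rewrite fsum_cons; apply: is_lub_add.
Qed.

Lemma fsum_fsetU (X1 X2 : {fset nat}) (G : nat -> M) :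
  (forall y, y \in X1 -> y \notin X2) ->
  fsum (X1 `|` X2) G = add (fsum X1 G) (fsum X2 G).
Proof.
move=> disj; rewrite /fsum (big_fsetID _ (mem X1)); congr (add _ _); apply: eq_fbigl => y;
  rewrite !inE /=; case: (boolP (y \in X1)) => [/disj|] /=; rewrite ?andbF ?andbT //.
by move/negPf => ->.
Qed.

Lemma partial_sums_ascending (g : nat -> M) : ascending add (fun n => fsum (iota 0 n) g).
Proof. by move=> n; exists (g n); rewrite -addn1 iotaD /fsum big_cat /= big_seq1. Qed.

Lemma isum_is_lub (g : nat -> M) : is_lub add (fun n => fsum (iota 0 n) g) (isum g).
Proof. exact/sup_is_lub/partial_sums_ascending. Qed.

Lemma isumD a b : isum (fun y => add (a y) (b y)) = add (isum a) (isum b).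
Proof.
apply: lub_unique (isum_is_lub _) _.
have -> : (fun n => fsum (iota 0 n) (fun y => add (a y) (b y))) =
          fun n => add (fsum (iota 0 n) a) (fsum (iota 0 n) b).
  by apply: functional_extensionality => n; rewrite /fsum big_split.
exact: (is_lub_add (partial_sums_ascending a) (partial_sums_ascending b)
  (isum_is_lub a) (isum_is_lub b)).2.
Qed.

(* An infinite sum with finite support X is the finite sum over X: the
   partial sums become constant once they cover X. *)
Lemma isum_finite_support (X : {fset nat}) b : (forall y, y \notin X -> b y = zero) ->
  isum b = fsum X b.
Proof.
move=> suppb; apply: lub_unique (isum_is_lub _) _.
apply: (@lub_eventually_const _ (\max_(y <- X) y).+1); first exact: partial_sums_ascending.
move=> n Xn; rewrite /fsum [LHS](bigID (mem X)) /=.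
rewrite [X in add _ X]big1; last by move=> i iX; apply: suppb.
rewrite Monoid.mulm1 -big_filter; apply/perm_big/uniq_perm.
- exact/filter_uniq/iota_uniq.
- exact: fset_uniq.
move=> y; rewrite mem_filter; apply/andP/idP => [[]//|yX]; split => //.
rewrite mem_iota /= add0n; apply: leq_trans Xn.
by rewrite ltnS; apply: leq_bigmax_seq.
Qed.

(* Existence of the least flow, by Kleene iteration of the flow equation. *)
Section LeastFlow.
Variable h : flowGraph M.
Hypothesis hwf : fg_wf h.

Definition flow_step (f : nat -> M) (x : nat) : M :=
  add (inflow h x) (fsum (fg_X h) (fun y => fg_E h y x (f y))).

Lemma flow_step_mono f g : (forall y, y \in fg_X h -> le (f y) (g y)) ->
  forall x, le (flow_step f x) (flow_step g x).
Proof.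
move=> fg x; apply: le_add; first exact: le_refl.
by apply: le_fsum => y Xy; apply: continuous_mono; [exact: hwf | exact: fg].
Qed.

Definition kleene_iterate (n : nat) : nat -> M := iter n flow_step (fun _ => zero).

Lemma kleene_ascending x : ascending add (fun n => kleene_iterate n x).
Proof.
move=> n; elim: n x => [|n IH] x; first exact: le0.
by apply: flow_step_mono => y _; apply: IH.
Qed.

Definition kleene_lub (x : nat) : M := sup (fun n => kleene_iterate n x).

(* Continuity of the edge functions makes the lub of the iterates a solution;
   every solution is above all iterates, hence above their lub. *)
Lemma kleene_lub_least : is_least_flow h kleene_lub.
Proof.
split.
  move=> x Xx; have lubx := sup_is_lub (kleene_ascending x).
  apply: lub_unique (lub_shift (kleene_ascending x) lubx) _.
  have [asc lub] := fsum_chain_lub (r := fg_X h)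
      (K := fun y n => fg_E h y x (kleene_iterate n y))
      (l := fun y => fg_E h y x (kleene_lub y)) (fun y Xy => conj
         (fun n => continuous_mono (@hwf y x Xy) (kleene_ascending y n))
         (@hwf y x Xy _ _ (kleene_ascending y) (sup_is_lub (kleene_ascending y)))).
  exact: fm_add_lub asc lub.
move=> g solg x Xx.
have below n : forall y, y \in fg_X h -> le (kleene_iterate n y) (g y).
  elim: n => [|n IH] y Xy; first exact: le0.
  by rewrite (solg y Xy); apply: flow_step_mono.
by have [_ least] := sup_is_lub (kleene_ascending x); apply: least => n; apply: below.
Qed.

Lemma flow_is_least : is_least_flow h (flow h).
Proof. by apply: epsilon_spec; exists kleene_lub; exact: kleene_lub_least. Qed.

End LeastFlow.

Definition ext_inflow (ha hb : flowGraph M) (x : nat) : M :=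
  isum (fun y => if (y \in fg_X ha) || (y \in fg_X hb) then zero else fg_in ha y x).

Lemma inflow_split (ha hb : flowGraph M) x :
  (forall y, y \in fg_X ha -> y \notin fg_X hb) ->
  (forall y, y \in fg_X hb -> fg_in ha y x = outflow hb y x) ->
  inflow ha x = add (ext_inflow ha hb x) (fsum (fg_X hb) (fun y => outflow hb y x)).
Proof.
move=> disj in_out; rewrite /inflow.
pose from_b y := if y \in fg_X hb then outflow hb y x else zero.
have -> : (fun y => if y \in fg_X ha then zero else fg_in ha y x) =
  fun y => add (if (y \in fg_X ha) || (y \in fg_X hb) then zero else fg_in ha y x) (from_b y).
  apply: functional_extensionality => y; rewrite /from_b.
  case: (boolP (y \in fg_X ha)) => [/[dup] ya /disj/negPf -> | _] /=; first by rewrite fm_add0.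
  case: (boolP (y \in fg_X hb)) => [yb|_]; first by rewrite fm_add0 in_out.
  by rewrite fm_addC fm_add0.
rewrite isumD [isum from_b](@isum_finite_support (fg_X hb)); last first.
  by move=> y /negPf yb; rewrite /from_b yb.
by congr (add _ _); apply: eq_fsum => y yb; rewrite /from_b yb.
Qed.

Lemma flow_split (ha hb : flowGraph M) x : fg_wf ha -> x \in fg_X ha ->
  (forall y, y \in fg_X ha -> y \notin fg_X hb) ->
  (forall y, y \in fg_X hb -> fg_in ha y x = outflow hb y x) ->
  flow ha x = add (ext_inflow ha hb x)
     (add (fsum (fg_X ha) (fun y => fg_E ha y x (flow ha y)))
          (fsum (fg_X hb) (fun y => outflow hb y x))).
Proof.
move=> wfa Xx disj in_out.
rewrite {1}((flow_is_least wfa).1 x Xx) (inflow_split disj in_out).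
by rewrite -!fm_addA (fm_addC (fsum (fg_X hb) _)).
Qed.

Lemma fg_union_wf (h1 h2 : flowGraph M) : fg_wf h1 -> fg_wf h2 -> fg_wf (fg_union h1 h2).
Proof.
move=> wf1 wf2 x y; rewrite /= in_fsetU.
by case: (boolP (x \in fg_X h1)) => x1 /= Xx; [exact: wf1 | exact: wf2].
Qed.

Lemma flow_union_solution (h1 h2 : flowGraph M) : fg_wf h1 -> fg_wf h2 ->
  fg_compat h1 h2 -> is_flow_sol (fg_union h1 h2) (flow_union h1 h2).
Proof.
move=> wf1 wf2 [disj12 in_out].
have disj21 y : y \in fg_X h2 -> y \notin fg_X h1.
  by move=> y2; apply/negP => /disj12; rewrite y2.
move=> x; rewrite /= in_fsetU => Xx.
rewrite fsum_fsetU // (@eq_fsum _ (fg_X h1) _ (fun y => fg_E h1 y x (flow h1 y))); last first.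
  by move=> y y1; rewrite /flow_union y1.
rewrite (@eq_fsum _ (fg_X h2) _ (outflow h2 ^~ x)); last first.
  by move=> y y2; rewrite /flow_union (negPf (disj21 _ y2)).
rewrite /flow_union /inflow /=; case: (boolP (x \in fg_X h1)) => x1.
  rewrite (flow_split wf1 x1 disj12) => [|y y2]; last by case: (in_out x y x1 y2).
  by congr (add (isum _) _); apply: functional_extensionality => y; rewrite in_fsetU.
have x2 : x \in fg_X h2 by rewrite (negPf x1) in Xx.
rewrite (flow_split wf2 x2 disj21) => [|y y1]; last by case: (in_out y x y1 x2).
rewrite (fm_addC (fsum (fg_X h2) _)).
by congr (add (isum _) _); apply: functional_extensionality => y; rewrite in_fsetU orbC.
Qed.

End FlowMonoidTheory.

Theorem mainTheorem3 (M : flowMonoid) (h1 h2 : flowGraph M) :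
  fg_wf h1 -> fg_wf h2 -> fg_compat h1 h2 ->
  forall x, x \in fg_X h1 `|` fg_X h2 ->
    mle (@fm_add M) (flow (fg_union h1 h2) x) (flow_union h1 h2 x).
Proof.
move=> wf1 wf2 compat.
have [_ least] := flow_is_least (fg_union_wf wf1 wf2).
exact: least _ (flow_union_solution wf1 wf2 compat).
Qed.
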